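(* Let $I$ be a finite index set of users. For each $i \in I$ let $p_i \in [0,1]$ and $\Delta p_i \in \mathbb{R}$ with $p_i - \Delta p_i \in [0,1]$. Let $\alpha > 0$ and $\beta > 0$, and define $$J = \{ i \in I : \alpha p_i > \beta \Delta p_i \}, \qquad K = \{ i \in I : \alpha p_i < \beta \Delta p_i \}.$$ Suppose that $\sum_{j \in J} p_j = \sum_{k \in K} p_k$ and that this common value is positive. Define $$\mathscr{A}_1 = \frac{\sum_{j\in J} p_j + \sum_{k \in K} (p_k - \Delta p_k)}{\sum_{j \in J} p_j}, \qquad \mathscr{A}_2 = \frac{\sum_{j\in J} (p_j - \Delta p_j) + \sum_{k \in K} p_k}{\sum_{k \in K} p_k}.$$ Then $\mathscr{A}_1 < \mathscr{A}_2$.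
   Context: Interpretation (real-time bidding for online ads): each $i \in I$ indexes an ad request from a distinct user $u_i$. $p_i$ is the action rate (AR), i.e. the probability that $u_i$ takes the advertiser's desired action if the advertiser's ad is shown; $p_i - \Delta p_i$ is the background AR (probability of the action if the ad is not shown); $\Delta p_i$ is the AR lift. Two bidders bid for the same advertiser in pure second-price auctions with no other candidates: $DSP_1$ uses value-based bidding (bid $\alpha p_i$) and $DSP_2$ uses lift-based bidding (bid $\beta \Delta p_i$). $DSP_1$ wins the users in $J$ (paying $\beta\Delta p_j$), $DSP_2$ wins those in $K$ (paying $\alpha p_k$). Under last-touch attribution, the expected actions attributed to $DSP_1$ and $DSP_2$ are $\sum_J p_j$ and $\sum_K p_k$; the hypothesis says both receive equal attribution. $\mathscr{A}_1$ (resp. $\mathscr{A}_2$) is the expected total number of actions per attributed action if only $DSP_1$ (resp. $DSP_2$) is considered. The theorem states that lift-based bidding yields more actions for the advertiser under equal attribution. *)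

From mathcomp Require Import all_boot all_order all_algebra.
Set Implicit Arguments. Unset Strict Implicit. Unset Printing Implicit Defensive.
Import Order.TTheory GRing.Theory Num.Theory.
Local Open Scope ring_scope.

(* J: users won by value-based bidder DSP_1 *)
Definition setJ (R : realFieldType) (I : finType) (alpha beta : R) (p dp : I -> R) : {set I} :=
  [set i | beta * dp i < alpha * p i].
(* K: users won by lift-based bidder DSP_2 *)
Definition setK (R : realFieldType) (I : finType) (alpha beta : R) (p dp : I -> R) : {set I} :=
  [set i | alpha * p i < beta * dp i].

Definition A1 (R : realFieldType) (I : finType) (alpha beta : R) (p dp : I -> R) : R :=
  (\sum_(j in setJ alpha beta p dp) p j + \sum_(k in setK alpha beta p dp) (p k - dp k))
  / \sum_(j in setJ alpha beta p dp) p j.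

Definition A2 (R : realFieldType) (I : finType) (alpha beta : R) (p dp : I -> R) : R :=
  (\sum_(j in setJ alpha beta p dp) (p j - dp j) + \sum_(k in setK alpha beta p dp) p k)
  / \sum_(k in setK alpha beta p dp) p k.

From mathcomp Require Import all_boot all_order all_algebra.
Set Implicit Arguments. Unset Strict Implicit. Unset Printing Implicit Defensive.
Import Order.TTheory GRing.Theory Num.Theory.
Local Open Scope ring_scope.

(* Write S for the common attributed mass.  Summing the bid inequalities over
   J and over K gives beta * sum_J dp < alpha * S < beta * sum_K dp, so the lift
   captured by DSP_2 exceeds the lift captured by DSP_1.  Both ratios have
   denominator S, and their numerators are 2S - sum_K dp and 2S - sum_J dp. *)

Lemma ltr_sum_of_sum_gt0 (R : numDomainType) (I : finType) (A : {set I})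
    (F G H : I -> R) :
  0 < \sum_(i in A) H i -> (forall i, i \in A -> F i < G i) ->
  \sum_(i in A) F i < \sum_(i in A) G i.
Proof.
move=> sumH_gt0 ltFG; apply: ltr_sum => //.
apply/hasP; case: (set_0Vmem A) => [A0 | [i Ai]]; last by exists i.
by move: sumH_gt0; rewrite A0 big_set0 ltxx.
Qed.

Lemma ltr_common_denominator (R : realFieldType) (S a b : R) :
  0 < S -> ((S + (S - b)) / S < ((S - a) + S) / S) = (a < b).
Proof. by move=> S_gt0; rewrite ltr_pM2r ?invr_gt0 // addrC ltrD2r ltrD2l ltrN2. Qed.

Section EqualAttribution.

Variables (R : realFieldType) (I : finType) (alpha beta : R) (p dp : I -> R).
Hypothesis beta_gt0 : 0 < beta.

Let J := setJ alpha beta p dp.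
Let K := setK alpha beta p dp.

Lemma sum_lift_setJ_lt_setK :
  \sum_(j in J) p j = \sum_(k in K) p k -> 0 < \sum_(j in J) p j ->
  \sum_(j in J) dp j < \sum_(k in K) dp k.
Proof.
move=> eqJK sumJ_gt0; have sumK_gt0 : 0 < \sum_(k in K) p k by rewrite -eqJK.
have ltJ : beta * \sum_(j in J) dp j < alpha * \sum_(j in J) p j.
  rewrite !mulr_sumr; apply: (ltr_sum_of_sum_gt0 (H := p) sumJ_gt0) => i.
  by rewrite inE.
have ltK : alpha * \sum_(k in K) p k < beta * \sum_(k in K) dp k.
  rewrite !mulr_sumr; apply: (ltr_sum_of_sum_gt0 (H := p) sumK_gt0) => i.
  by rewrite inE.
by rewrite -(ltr_pM2l beta_gt0); apply: lt_trans ltJ _; rewrite eqJK.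
Qed.

End EqualAttribution.

Theorem theorem1 (R : realFieldType) (I : finType) (p dp : I -> R) (alpha beta : R)
  (hp : forall i, 0 <= p i <= 1)
  (hbg : forall i, 0 <= p i - dp i <= 1)
  (ha : 0 < alpha) (hb : 0 < beta)
  (heq : \sum_(j in setJ alpha beta p dp) p j = \sum_(k in setK alpha beta p dp) p k)
  (hpos : 0 < \sum_(j in setJ alpha beta p dp) p j) :
  A1 alpha beta p dp < A2 alpha beta p dp.
Proof.
rewrite /A1 /A2 !sumrB -heq ltr_common_denominator //.
exact: sum_lift_setJ_lt_setK.
Qed.
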